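(* Let $W\in\mathscr{W}$, $m\ge1$ an integer, $k>0$, $b\in(0,1)$, and let $\bar r>0$ satisfy $\Omega(\bar r)=b$. Assume $J(\bar r)<\frac{m^2}{4k^2}$ and let $d_\pm=\frac12\pm\bigl(\frac14-\frac{k^2}{m^2}J(\bar r)\bigr)^{1/2}$ (so $0<d_-<\frac12<d_+<1$). Define $U_\pm(r)=(b-\Omega(r))^{d_\pm}$ for $r>\bar r$. Then there exists $\gamma>0$ such that $\mathscr{L}(U_\pm)\ge\gamma U_\pm'>0$ on $(\bar r,\infty)$, where $\mathscr{L}U=-\partial_r\bigl(\mathcal{A}(r)\partial_r^*U\bigr)+\mathcal{B}_b(r)U$.
   Context: $\Omega(r)=r^{-2}\int_0^rW(s)s\,ds$, $\Phi=2\Omega W$, $J=\Phi/(\Omega')^2$. Class $\mathscr{W}$: $\mathcal{C}^1$ $W:[0,\infty)\to(0,\infty)$ with $W'(0)=0$, $W'<0$ on $(0,\infty)$, $\int_0^\infty Wr\,dr<\infty$, $J'<0$ on $(0,\infty)$, $rJ'(r)\to0$ as $r\to\infty$, $W(0)=2$. $\partial_r^*=\partial_r+\frac1r$, $\mathcal{A}(r)=\frac{r^2}{m^2+k^2r^2}$, $\mathcal{B}_b(r)=1-\frac{k^2}{m^2}\frac{\mathcal{A}(r)\Phi(r)}{(\Omega(r)-b)^2}+\frac{r}{\Omega(r)-b}\partial_r\Bigl(\frac{W(r)}{m^2+k^2r^2}\Bigr)$. *)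

From Stdlib Require Import Reals Lra ClassicalEpsilon.
Open Scope R_scope.

(* Derivative of f at x: the unique l with derivable_pt_lim f x l, if it
   exists (default 0 otherwise; statements below assert existence where needed). *)
Definition Deriv (f : R -> R) (x : R) : R :=
  match excluded_middle_informative (exists l, derivable_pt_lim f x l) with
  | left H => proj1_sig (constructive_indefinite_description _ H)
  | right _ => 0
  end.

(* Riemann integral of f over [a,b] (0 if f is not Riemann integrable). *)
Definition RInt (f : R -> R) (a b : R) : R :=
  match excluded_middle_informative (exists pr : Riemann_integrable f a b, True) with
  | left H => RiemannInt (proj1_sig (constructive_indefinite_description _ H))
  | right _ => 0
  end.

Definition Omega (W : R -> R) (r : R) : R :=
  / (r ^ 2) * RInt (fun s => W s * s) 0 r.

Definition Phi (W : R -> R) (r : R) : R := 2 * Omega W r * W r.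

Definition J (W : R -> R) (r : R) : R :=
  Phi W r / (Deriv (Omega W) r) ^ 2.

(* The class \mathscr{W}; W is only relevant on [0, oo). *)
Definition classW (W : R -> R) : Prop :=
  (* C^1 on [0,oo), with derivative Wd (one-sided at 0) *)
  (exists Wd : R -> R,
      (forall r, 0 < r -> derivable_pt_lim W r (Wd r)) /\
      (forall eps, 0 < eps -> exists delta, 0 < delta /\
          forall h, 0 < h < delta -> Rabs ((W h - W 0) / h - Wd 0) < eps) /\
      (forall r, 0 <= r -> limit1_in Wd (fun x => 0 <= x) (Wd r) r) /\
      Wd 0 = 0 /\
      (forall r, 0 < r -> Wd r < 0)) /\
  (forall r, 0 <= r -> 0 < W r) /\
  (* \int_0^oo W r dr < oo (W > 0, so: bounded partial integrals) *)
  (exists M, forall R0, 0 < R0 -> RInt (fun s => W s * s) 0 R0 <= M) /\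
  (forall r, 0 < r -> Deriv (J W) r < 0) /\
  (forall eps, 0 < eps -> exists R0, forall r, R0 < r -> Rabs (r * Deriv (J W) r) < eps) /\
  W 0 = 2.

Definition Acoef (m k r : R) : R := r ^ 2 / (m ^ 2 + k ^ 2 * r ^ 2).

Definition Bcoef (W : R -> R) (m k b r : R) : R :=
  1 - k ^ 2 / m ^ 2 * (Acoef m k r * Phi W r / (Omega W r - b) ^ 2)
    + r / (Omega W r - b) * Deriv (fun s => W s / (m ^ 2 + k ^ 2 * s ^ 2)) r.

(* d_pm = 1/2 +/- (1/4 - k^2/m^2 J(rbar))^{1/2}; sgn = 1 for d_+, -1 for d_- *)
Definition dpm (W : R -> R) (m k rbar sgn : R) : R :=
  / 2 + sgn * sqrt (/ 4 - k ^ 2 / m ^ 2 * J W rbar).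

Definition Ufun (W : R -> R) (b d : R) (r : R) : R := Rpower (b - Omega W r) d.

(* the flux A(r) d*_r U = A(r) (U' + U/r) *)
Definition flux (m k : R) (U : R -> R) (r : R) : R :=
  Acoef m k r * (Deriv U r + U r / r).

Definition Lop (W : R -> R) (m k b : R) (U : R -> R) (r : R) : R :=
  - Deriv (flux m k U) r + Bcoef W m k b r * U r.

(* Put [psi = - Omega' / (b - Omega)], positive on [(rbar, oo)], so that [U' = d psi U].
   With [Omega' = (W - 2 Omega) / r] a direct computation writes [L U / U] as a sum of five
   terms. Since [J] decreases, [d (1 - d) = k^2 J(rbar) / m^2 >= k^2 J(r) / m^2]; together with
   [W' < 0], [0 < W < 2 Omega] and [Omega < b] every term is nonnegative, and
   [L U / U >= 2 d k^2 r^3 psi / D^2 + k^2 r^2 / D] with [D = m^2 + k^2 r^2]. The first term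
   dominates a fixed multiple of [d psi] on bounded intervals, the second one does for large
   [r], because there [b - Omega] stays away from [0] and [psi <= 2 b / (r (b - Omega))]. *)

From Pilot Require Import Defs.
From Stdlib Require Import Reals Lra ClassicalEpsilon.
From Coquelicot Require Import Coquelicot.
Open Scope R_scope.

Lemma Deriv_is_derive f x l : is_derive f x l -> Deriv f x = l.
Proof.
  intro H; apply is_derive_Reals in H. unfold Deriv.
  destruct excluded_middle_informative as [Hex | Hnex].
  - destruct constructive_indefinite_description as [l' Hl']; simpl.
    exact (uniqueness_limite f x l' l Hl' H).
  - exfalso; apply Hnex; now exists l.
Qed.

(* [Deriv] is [0] where [f] is not differentiable, so a nonzero value certifies
   differentiability. *)
Lemma Deriv_correct f x : Deriv f x <> 0 -> is_derive f x (Deriv f x).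
Proof.
  unfold Deriv. destruct excluded_middle_informative as [Hex | Hnex]; [| now intro].
  destruct constructive_indefinite_description as [l Hl]; simpl.
  intros _; now apply is_derive_Reals.
Qed.

Lemma Defs_RInt_correct f a b : ex_RInt f a b -> Defs.RInt f a b = RInt f a b.
Proof.
  intro Hex. unfold Defs.RInt.
  destruct excluded_middle_informative as [Hpr | Hnpr].
  - destruct constructive_indefinite_description as [pr Hpr']; simpl.
    now rewrite (RInt_Reals f a b pr).
  - exfalso; apply Hnpr. now exists (ex_RInt_Reals_0 f a b Hex).
Qed.

Lemma locally_of_continuous_lt (f : R -> R) (x c : R) :
  continuous f x -> f x < c -> locally x (fun y => f y < c).
Proof.
  intros Hf Hfx. exact (Hf _ (locally_open _ _ (open_lt c) (fun _ H => H) _ Hfx)).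
Qed.

Lemma locally_gt (a x : R) : a < x -> locally x (fun y => a < y).
Proof. exact (locally_open _ _ (open_gt a) (fun _ H => H) x). Qed.

Lemma is_derive_neg_decreasing (f f' : R -> R) (a : R) :
  (forall x, a < x -> is_derive f x (f' x)) -> (forall x, a < x -> f' x < 0) ->
  forall x y, a < x -> x < y -> f y < f x.
Proof.
  intros Hd Hneg x y Hx Hxy.
  destruct (MVT_gen f x y f') as [c [Hc Hfc]];
    rewrite ?Rmin_left, ?Rmax_right in * by lra.
  - intros z Hz; apply Hd; lra.
  - intros z Hz. apply continuity_pt_filterlim.
    apply (ex_derive_continuous (K := R_AbsRing) (V := R_NormedModule)).
    exists (f' z); apply Hd; lra.
  - assert (f' c < 0) by (apply Hneg; lra). nra.
Qed.

Lemma Deriv_neg_decreasing (f : R -> R) (a : R) :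
  (forall x, a < x -> Deriv f x < 0) -> forall x y, a < x -> x < y -> f y < f x.
Proof.
  intro Hneg. apply (is_derive_neg_decreasing f (Deriv f) a); [| exact Hneg].
  intros x Hx; apply Deriv_correct, Rlt_not_eq, Hneg, Hx.
Qed.

Lemma right_continuous_of_right_derivative (f : R -> R) (l : R) :
  (forall eps, 0 < eps -> exists delta, 0 < delta /\
     forall h, 0 < h < delta -> Rabs ((f h - f 0) / h - l) < eps) ->
  forall eps, 0 < eps -> exists delta, 0 < delta /\
     forall h, 0 < h < delta -> Rabs (f h - f 0) < eps.
Proof.
  intros Hder eps Heps. destruct (Hder 1 Rlt_0_1) as [delta [Hdelta Hquot]].
  assert (Hc : 0 < 1 + Rabs l) by (pose proof (Rabs_pos l); lra).
  exists (Rmin delta (eps / (1 + Rabs l))); split.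
  { apply Rmin_pos; [lra | now apply Rdiv_lt_0_compat]. }
  intros h [Hh Hhd].
  assert (Hh1 := Rlt_le_trans _ _ _ Hhd (Rmin_l _ _)).
  assert (Hh2 := Rlt_le_trans _ _ _ Hhd (Rmin_r _ _)).
  assert (Hq : Rabs ((f h - f 0) / h) < 1 + Rabs l).
  { pose proof (Hquot h (conj Hh Hh1)).
    pose proof (Rabs_triang ((f h - f 0) / h - l) l).
    replace ((f h - f 0) / h - l + l) with ((f h - f 0) / h) in * by ring. lra. }
  replace (f h - f 0) with (h * ((f h - f 0) / h)) by (field; lra).
  rewrite Rabs_mult, (Rabs_right h) by lra.
  apply (Rmult_lt_compat_l h) in Hq; [| lra].
  apply (Rmult_lt_compat_r (1 + Rabs l)) in Hh2; [| lra].
  replace (eps / (1 + Rabs l) * (1 + Rabs l)) with eps in Hh2 by (field; lra).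
  lra.
Qed.

Lemma half_pm_sqrt_spec c sgn : 0 < c < / 4 -> sgn = 1 \/ sgn = -1 ->
  let d := / 2 + sgn * sqrt (/ 4 - c) in 0 < d < 1 /\ d * (1 - d) = c.
Proof.
  intros Hc Hsgn d.
  assert (Hsq2 : sqrt (/ 4 - c) * sqrt (/ 4 - c) = / 4 - c) by (apply sqrt_sqrt; lra).
  assert (0 <= sqrt (/ 4 - c)) by apply sqrt_pos.
  assert (sqrt (/ 4 - c) < / 2) by nra.
  unfold d; destruct Hsgn as [-> | ->]; split; try split; nra.
Qed.

Lemma scaled_lt_quarter (k M j : R) : 0 < k -> 0 < M -> 0 < j ->
  j < M ^ 2 / (4 * k ^ 2) -> 0 < k ^ 2 / M ^ 2 * j < / 4.
Proof.
  intros Hk HM Hj HjM.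
  assert (HkM : 0 < k ^ 2 / M ^ 2) by (apply Rdiv_lt_0_compat; apply pow_lt; lra).
  split; [now apply Rmult_lt_0_compat |].
  replace (/ 4) with (k ^ 2 / M ^ 2 * (M ^ 2 / (4 * k ^ 2))) by (field; lra).
  now apply Rmult_lt_compat_l.
Qed.

Lemma mul_le_either (gamma A B d p : R) :
  0 <= gamma -> 0 <= d <= 1 -> 0 <= p -> 0 <= A -> 0 <= B ->
  gamma <= A \/ gamma * p <= B -> gamma * (d * p) <= A * (d * p) + B.
Proof.
  intros Hg Hd Hp HA HB [Hle | Hle].
  - assert (gamma * (d * p) <= A * (d * p)) by (apply Rmult_le_compat_r; nra). lra.
  - assert (gamma * (d * p) <= gamma * p) by (apply Rmult_le_compat_l; nra).
    assert (0 <= A * (d * p)) by (apply Rmult_le_pos; nra). lra.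
Qed.

Lemma cube_div_quadratic_le (m k a x : R) : 0 < m -> 0 < a -> a <= x ->
  a ^ 3 / (m ^ 2 + k ^ 2 * a ^ 2) <= x ^ 3 / (m ^ 2 + k ^ 2 * x ^ 2).
Proof.
  intros Hm Ha Hax.
  assert (Da : 0 < m ^ 2 + k ^ 2 * a ^ 2) by nra.
  assert (Dx : 0 < m ^ 2 + k ^ 2 * x ^ 2) by nra.
  assert (a ^ 3 <= x ^ 3) by (apply pow_incr; lra).
  apply (Rmult_le_reg_r ((m ^ 2 + k ^ 2 * a ^ 2) * (m ^ 2 + k ^ 2 * x ^ 2))); [nra |].
  replace (a ^ 3 / (m ^ 2 + k ^ 2 * a ^ 2)
             * ((m ^ 2 + k ^ 2 * a ^ 2) * (m ^ 2 + k ^ 2 * x ^ 2)))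
    with (m ^ 2 * a ^ 3 + k ^ 2 * a ^ 2 * (a * x ^ 2)) by (field; lra).
  replace (x ^ 3 / (m ^ 2 + k ^ 2 * x ^ 2)
             * ((m ^ 2 + k ^ 2 * a ^ 2) * (m ^ 2 + k ^ 2 * x ^ 2)))
    with (m ^ 2 * x ^ 3 + k ^ 2 * a ^ 2 * (x * x ^ 2)) by (field; lra).
  assert (0 <= k ^ 2 * a ^ 2) by nra.
  assert (a * x ^ 2 <= x * x ^ 2) by nra.
  nra.
Qed.

Lemma near_coefficient_le (m k a x c : R) : 0 < k -> 0 < a -> a < x -> x <= c ->
  2 * k ^ 2 * a ^ 3 / (m ^ 2 + k ^ 2 * c ^ 2) ^ 2
    <= 2 * k ^ 2 * x ^ 3 / (m ^ 2 + k ^ 2 * x ^ 2) ^ 2.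
Proof.
  intros Hk Ha Hax Hxc.
  assert (0 < k ^ 2) by (apply pow_lt; lra).
  assert (a ^ 3 <= x ^ 3) by (apply pow_incr; lra).
  assert (0 < a ^ 3) by (apply pow_lt; lra).
  assert (HD : 0 < m ^ 2 + k ^ 2 * x ^ 2) by nra.
  assert ((m ^ 2 + k ^ 2 * x ^ 2) ^ 2 <= (m ^ 2 + k ^ 2 * c ^ 2) ^ 2).
  { apply pow_incr; split; [lra |].
    assert (x ^ 2 <= c ^ 2) by (apply pow_incr; lra). nra. }
  unfold Rdiv. apply Rmult_le_compat; try nra.
  - apply Rlt_le, Rinv_0_lt_compat; nra.
  - apply Rinv_le_contravar; nra.
Qed.

Section Vorticity_profile.

Variables W Wd : R -> R.
Hypothesis W_deriv : forall r, 0 < r -> is_derive W r (Wd r).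
Hypothesis W_right_cont : forall eps, 0 < eps ->
  exists delta, 0 < delta /\ forall h, 0 < h < delta -> Rabs (W h - W 0) < eps.
Hypothesis Wd_neg : forall r, 0 < r -> Wd r < 0.
Hypothesis W_pos : forall r, 0 < r -> 0 < W r.

(* Extending [W] by the constant [W 0] on the left makes the integrand of
   [Omega] continuous on all of [R], which is what Coquelicot's FTC needs. *)
Definition Wext (s : R) : R := W (Rmax 0 s).

Lemma Wext_continuous x : continuity_pt Wext x.
Proof.
  destruct (Rlt_or_le 0 x) as [Hx | Hx].
  - apply continuity_pt_filterlim, (continuous_ext_loc _ W).
    + apply (filter_imp (fun y => 0 < y)); [| now apply locally_gt].
      intros y Hy; unfold Wext; now rewrite Rmax_right by lra.
    + apply (ex_derive_continuous (K := R_AbsRing) (V := R_NormedModule)).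
      exists (Wd x); now apply W_deriv.
  - intros eps Heps. destruct (W_right_cont eps Heps) as [delta [Hdelta Hd]].
    exists delta; split; [lra |]. intros y [_ Hy]; simpl in *; unfold R_dist in *.
    unfold Wext; rewrite (Rmax_left 0 x) by lra.
    destruct (Rle_or_lt y 0) as [Hy0 | Hy0].
    + rewrite Rmax_left, Rminus_diag, Rabs_R0 by lra. lra.
    + rewrite Rmax_right by lra. apply Hd. apply Rabs_def2 in Hy; lra.
Qed.

Lemma Wext_moment_continuous x : continuous (fun s => Wext s * s) x.
Proof.
  apply continuity_pt_filterlim, continuity_pt_mult;
    [apply Wext_continuous | apply derivable_continuous_pt, derivable_pt_id].
Qed.

Lemma ex_RInt_Wext_moment a b : ex_RInt (fun s => Wext s * s) a b.
Proof.
  apply (ex_RInt_continuous (V := R_CompleteNormedModule)).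
  intros; apply Wext_moment_continuous.
Qed.

Lemma Omega_eq x : 0 < x -> Omega W x = RInt (fun s => Wext s * s) 0 x / x ^ 2.
Proof.
  intro Hx.
  assert (Hext : forall s, Rmin 0 x < s < Rmax 0 x -> Wext s * s = W s * s).
  { intros s Hs; rewrite Rmin_left, Rmax_right in Hs by lra.
    unfold Wext; now rewrite Rmax_right by lra. }
  unfold Omega. rewrite Defs_RInt_correct.
  - rewrite (RInt_ext _ _ _ _ Hext). unfold Rdiv; ring.
  - exact (ex_RInt_ext _ _ _ _ Hext (ex_RInt_Wext_moment 0 x)).
Qed.

Lemma is_derive_Omega x : 0 < x -> is_derive (Omega W) x ((W x - 2 * Omega W x) / x).
Proof.
  intro Hx. set (F := fun y => RInt (fun s => Wext s * s) 0 y).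
  assert (HF : is_derive F x (Wext x * x)).
  { apply (is_derive_RInt (fun s => Wext s * s) F 0); [| apply Wext_moment_continuous].
    apply filter_forall; intros y.
    apply (RInt_correct (V := R_CompleteNormedModule)), ex_RInt_Wext_moment. }
  apply (is_derive_ext_loc (fun y => F y / y ^ 2)).
  - apply (filter_imp (fun y => 0 < y)); [| now apply locally_gt].
    intros y Hy; symmetry; now apply Omega_eq.
  - rewrite Omega_eq by lra. fold (F x).
    unfold Wext in HF; rewrite Rmax_right in HF by lra.
    auto_derive.
    + repeat split; [now exists (W x * x) | nra].
    + replace (Derive (fun y => F y) x) with (W x * x)
        by (symmetry; now apply is_derive_unique).
      field; lra.
Qed.

Lemma Deriv_Omega x : 0 < x -> Deriv (Omega W) x = (W x - 2 * Omega W x) / x.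
Proof. intro Hx; now apply Deriv_is_derive, is_derive_Omega. Qed.

(* Since [W] decreases, [W x] is below its weighted mean [2 Omega x] over [0, x]. *)
Lemma W_lt_2Omega x : 0 < x -> W x < 2 * Omega W x.
Proof.
  intro Hx.
  assert (Hlin : RInt (fun s => W x * s) 0 x = W x * x ^ 2 / 2).
  { apply is_RInt_unique.
    replace (W x * x ^ 2 / 2) with (minus (W x * x ^ 2 / 2) (W x * 0 ^ 2 / 2))
      by (unfold minus, plus, opp; simpl; field).
    apply (is_RInt_derive (fun s => W x * s ^ 2 / 2)).
    - intros s _; auto_derive; [easy | field].
    - intros s _; apply continuity_pt_filterlim.
      apply continuity_pt_mult; [apply continuity_pt_const; now intros ? ? |].
      apply derivable_continuous_pt, derivable_pt_id. }
  assert (Hlt : RInt (fun s => W x * s) 0 x < RInt (fun s => Wext s * s) 0 x).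
  { apply RInt_lt; [lra | intros; apply Wext_moment_continuous | |].
    - intros s _; apply continuity_pt_filterlim, continuity_pt_mult;
        [apply continuity_pt_const; now intros ? ? |
         apply derivable_continuous_pt, derivable_pt_id].
    - intros s Hs. unfold Wext; rewrite Rmax_right by lra.
      apply Rmult_lt_compat_r; [lra |].
      apply (is_derive_neg_decreasing W Wd 0); auto; lra. }
  rewrite Omega_eq, Hlin in * by lra. revert Hlt.
  generalize (RInt (fun s => Wext s * s) 0 x : R); intros I HI.
  assert (0 < x ^ 2) by (apply pow_lt; lra).
  apply (Rmult_lt_reg_r (x ^ 2 / 2)); [lra |].
  replace (2 * (I / x ^ 2) * (x ^ 2 / 2)) with I by (field; lra).
  lra.
Qed.

Lemma Omega_decreasing x y : 0 < x -> x < y -> Omega W y < Omega W x.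
Proof.
  apply (is_derive_neg_decreasing _ (fun r => (W r - 2 * Omega W r) / r) 0).
  - exact is_derive_Omega.
  - intros r Hr. assert (W r < 2 * Omega W r) by now apply W_lt_2Omega.
    apply Rdiv_neg_pos; lra.
Qed.

Lemma J_eq x : 0 < x -> J W x = 2 * Omega W x * W x / ((W x - 2 * Omega W x) / x) ^ 2.
Proof. intro Hx; unfold J, Phi; now rewrite Deriv_Omega. Qed.

Lemma J_pos x : 0 < x -> 0 < J W x.
Proof.
  intro Hx. rewrite J_eq by exact Hx.
  assert (W x < 2 * Omega W x) by now apply W_lt_2Omega.
  assert (0 < W x) by now apply W_pos.
  apply Rdiv_lt_0_compat; [apply Rmult_lt_0_compat; lra |].
  assert ((W x - 2 * Omega W x) / x < 0) by (apply Rdiv_neg_pos; lra).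
  nra.
Qed.

Variables m k b : R.
Hypothesis m_ge1 : 1 <= m.
Hypothesis k_pos : 0 < k.

(* This is [- Omega' / (b - Omega)], by [Omega' = (W - 2 Omega) / r]. *)
Definition psi (r : R) : R := (2 * Omega W r - W r) / (r * (b - Omega W r)).

Lemma Deriv_W_div_quadratic r : 0 < r ->
  Deriv (fun s => W s / (m ^ 2 + k ^ 2 * s ^ 2)) r =
  (Wd r * (m ^ 2 + k ^ 2 * r ^ 2) - W r * (2 * k ^ 2 * r)) / (m ^ 2 + k ^ 2 * r ^ 2) ^ 2.
Proof.
  intro Hr. apply Deriv_is_derive.
  assert (HW := W_deriv r Hr).
  assert (0 < m ^ 2 + (k * r) ^ 2) by nra.
  auto_derive.
  - repeat split; [now exists (Wd r) | lra].
  - replace (Derive (fun s => W s) r) with (Wd r) by (symmetry; now apply is_derive_unique).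
    field; lra.
Qed.

Lemma psi_pos r : 0 < r -> Omega W r < b -> 0 < psi r.
Proof.
  intros Hr Hb. assert (W r < 2 * Omega W r) by now apply W_lt_2Omega.
  apply Rdiv_lt_0_compat; nra.
Qed.

Variable d : R.

Definition Lop_Ufun_ratio (r : R) : R :=
  let D := m ^ 2 + k ^ 2 * r ^ 2 in
  Acoef m k r * (d * (1 - d) - k ^ 2 / m ^ 2 * J W r) * psi r ^ 2
  + 2 * d * k ^ 2 * r ^ 3 / D ^ 2 * psi r
  + r * (d - 1) * Wd r / (D * (b - Omega W r))
  + ((k ^ 2 * r ^ 2 - m ^ 2) / D ^ 2 + 1)
  + 2 * k ^ 2 * r ^ 2 * W r / (D ^ 2 * (b - Omega W r)).

Lemma is_derive_Ufun r : 0 < r -> Omega W r < b ->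
  is_derive (Ufun W b d) r (d * psi r * Ufun W b d r).
Proof.
  intros Hr Hb. assert (HO := is_derive_Omega r Hr).
  unfold Ufun, Rpower, psi. auto_derive.
  - split; [now exists ((W r - 2 * Omega W r) / r) | lra].
  - replace (Derive (fun x => Omega W x) r) with ((W r - 2 * Omega W r) / r)
      by (symmetry; now apply is_derive_unique).
    replace (b + - Omega W r) with (b - Omega W r) by ring.
    field; lra.
Qed.

(* Stated through [Bcoef], so that [L U = U * Lop_Ufun_ratio] is immediate. *)
Lemma is_derive_flux_Ufun r : 0 < r -> Omega W r < b ->
  is_derive (flux m k (Ufun W b d)) r
    (Ufun W b d r * (Bcoef W m k b r - Lop_Ufun_ratio r)).
Proof.
  intros Hr Hb.
  assert (HO := is_derive_Omega r Hr). assert (HW := W_deriv r Hr).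
  assert (HOb : locally r (fun z => Omega W z < b)).
  { apply locally_of_continuous_lt; [| exact Hb].
    apply (ex_derive_continuous (K := R_AbsRing) (V := R_NormedModule)).
    now exists ((W r - 2 * Omega W r) / r). }
  apply (is_derive_ext_loc
    (fun z => Acoef m k z * (d * psi z * Ufun W b d z + Ufun W b d z / z))).
  - apply (filter_imp (fun z => 0 < z /\ Omega W z < b));
      [| apply filter_and; [now apply locally_gt | exact HOb]].
    intros z [Hz Hzb]. unfold flux.
    now rewrite (Deriv_is_derive _ _ _ (is_derive_Ufun z Hz Hzb)).
  - assert (W r < 2 * Omega W r) by now apply W_lt_2Omega.
    assert (0 < m ^ 2 + (k * r) ^ 2) by nra.
    unfold Acoef, psi, Ufun, Rpower. auto_derive.
    + repeat split; try (now exists ((W r - 2 * Omega W r) / r));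
        try (now exists (Wd r)); nra.
    + replace (Derive (fun x => Omega W x) r) with ((W r - 2 * Omega W r) / r)
        by (symmetry; now apply is_derive_unique).
      replace (Derive (fun x => W x) r) with (Wd r)
        by (symmetry; now apply is_derive_unique).
      unfold Bcoef, Lop_Ufun_ratio, Phi, Acoef, psi.
      rewrite Deriv_W_div_quadratic, J_eq by exact Hr.
      replace (b + - Omega W r) with (b - Omega W r) by ring.
      field; repeat split; lra.
Qed.

Lemma Lop_Ufun r : 0 < r -> Omega W r < b ->
  Lop W m k b (Ufun W b d) r = Ufun W b d r * Lop_Ufun_ratio r.
Proof.
  intros Hr Hb. unfold Lop.
  rewrite (Deriv_is_derive _ _ _ (is_derive_flux_Ufun r Hr Hb)). ring.
Qed.

Lemma Deriv_Ufun_pos r : 0 < r -> Omega W r < b -> 0 < d ->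
  0 < Deriv (Ufun W b d) r.
Proof.
  intros Hr Hb Hd. rewrite (Deriv_is_derive _ _ _ (is_derive_Ufun r Hr Hb)).
  assert (0 < psi r) by now apply psi_pos.
  assert (0 < Ufun W b d r) by apply exp_pos.
  apply Rmult_lt_0_compat; [apply Rmult_lt_0_compat |]; lra.
Qed.

Lemma Lop_Ufun_ratio_lower r : 0 < r -> Omega W r < b -> 0 < d < 1 ->
  k ^ 2 / m ^ 2 * J W r <= d * (1 - d) ->
  2 * d * k ^ 2 * r ^ 3 / (m ^ 2 + k ^ 2 * r ^ 2) ^ 2 * psi r
    + k ^ 2 * r ^ 2 / (m ^ 2 + k ^ 2 * r ^ 2) <= Lop_Ufun_ratio r.
Proof.
  intros Hr Hb Hd HJ. unfold Lop_Ufun_ratio; cbv zeta.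
  set (D := m ^ 2 + k ^ 2 * r ^ 2).
  assert (HD : 0 < D) by (unfold D; nra).
  assert (HbO : 0 < b - Omega W r) by lra.
  assert (Hpsi := psi_pos r Hr Hb).
  assert (Hw := W_pos r Hr). assert (Hwd := Wd_neg r Hr).
  assert (Hkr : 0 < k ^ 2 * r ^ 2) by (apply Rmult_lt_0_compat; apply pow_lt; lra).
  assert (T1 : 0 <= Acoef m k r * (d * (1 - d) - k ^ 2 / m ^ 2 * J W r) * psi r ^ 2).
  { apply Rmult_le_pos; [apply Rmult_le_pos |]; [| lra | nra].
    unfold Acoef; fold D. apply Rlt_le, Rdiv_lt_0_compat; [apply pow_lt |]; lra. }
  assert (T3 : 0 <= r * (d - 1) * Wd r / (D * (b - Omega W r))).
  { apply Rlt_le, Rdiv_lt_0_compat; [| nra].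
    replace (r * (d - 1) * Wd r) with (r * ((1 - d) * - Wd r)) by ring.
    apply Rmult_lt_0_compat; [| apply Rmult_lt_0_compat]; lra. }
  assert (T5 : 0 <= 2 * k ^ 2 * r ^ 2 * W r / (D ^ 2 * (b - Omega W r))).
  { apply Rlt_le, Rdiv_lt_0_compat; [nra |].
    apply Rmult_lt_0_compat; [apply pow_lt |]; lra. }
  assert (T4 : k ^ 2 * r ^ 2 / D <= (k ^ 2 * r ^ 2 - m ^ 2) / D ^ 2 + 1).
  { apply (Rmult_le_reg_r (D ^ 2)); [apply pow_lt; lra |].
    replace (k ^ 2 * r ^ 2 / D * D ^ 2) with (k ^ 2 * r ^ 2 * D) by (field; lra).
    replace (((k ^ 2 * r ^ 2 - m ^ 2) / D ^ 2 + 1) * D ^ 2)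
      with (k ^ 2 * r ^ 2 * D + (k ^ 2 * r ^ 2 + m ^ 2 * (D - 1))) by (unfold D in *; field; lra).
    assert (1 <= m ^ 2) by nra.
    assert (0 <= m ^ 2 * (D - 1)) by (apply Rmult_le_pos; unfold D; lra).
    lra. }
  lra.
Qed.

Lemma far_coefficient_le rbar c r : 0 < rbar -> Omega W rbar = b -> rbar < c -> c <= r ->
  k ^ 2 * c ^ 3 * (b - Omega W c) / (2 * b * (m ^ 2 + k ^ 2 * c ^ 2)) * psi r
    <= k ^ 2 * r ^ 2 / (m ^ 2 + k ^ 2 * r ^ 2).
Proof.
  intros Hrbar Hb Hc Hcr.
  assert (Hr : 0 < r) by lra.
  assert (Hb0 : 0 < b).
  { rewrite <- Hb. pose proof (W_pos rbar Hrbar). pose proof (W_lt_2Omega rbar Hrbar). lra. }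
  assert (Hbr : Omega W r < b) by (rewrite <- Hb; apply Omega_decreasing; lra).
  assert (Hphi0 : 0 < b - Omega W c).
  { rewrite <- Hb. pose proof (Omega_decreasing rbar c Hrbar Hc). lra. }
  assert (Hphi : b - Omega W c <= b - Omega W r).
  { destruct (Rle_lt_or_eq_dec _ _ Hcr) as [Hlt | ->]; [| lra].
    pose proof (Omega_decreasing c r ltac:(lra) Hlt). lra. }
  assert (Hnum : 0 < 2 * Omega W r - W r < 2 * b).
  { pose proof (W_pos r Hr). pose proof (W_lt_2Omega r Hr). lra. }
  assert (Hcube := cube_div_quadratic_le m k c r ltac:(lra) ltac:(lra) Hcr).
  assert (HD : 0 < m ^ 2 + k ^ 2 * r ^ 2) by nra.
  assert (HDc : 0 < m ^ 2 + k ^ 2 * c ^ 2) by nra.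
  assert (Hk2 : 0 < k ^ 2) by (apply pow_lt; lra).
  assert (0 < c ^ 3 / (m ^ 2 + k ^ 2 * c ^ 2))
    by (apply Rdiv_lt_0_compat; [apply pow_lt |]; lra).
  assert (Hratio : 0 <= (2 * Omega W r - W r) / (2 * b) <= 1).
  { split; [apply Rlt_le, Rdiv_lt_0_compat; lra |].
    apply (Rmult_le_reg_r (2 * b)); [lra |].
    unfold Rdiv; rewrite Rmult_assoc, Rinv_l by lra. lra. }
  unfold psi. apply (Rmult_le_reg_r (r * (b - Omega W r))); [nra |].
  replace (k ^ 2 * c ^ 3 * (b - Omega W c) / (2 * b * (m ^ 2 + k ^ 2 * c ^ 2))
           * ((2 * Omega W r - W r) / (r * (b - Omega W r))) * (r * (b - Omega W r)))
    with (k ^ 2 * (b - Omega W c) * (c ^ 3 / (m ^ 2 + k ^ 2 * c ^ 2))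
          * ((2 * Omega W r - W r) / (2 * b))) by (field; lra).
  replace (k ^ 2 * r ^ 2 / (m ^ 2 + k ^ 2 * r ^ 2) * (r * (b - Omega W r)))
    with (k ^ 2 * (b - Omega W r) * (r ^ 3 / (m ^ 2 + k ^ 2 * r ^ 2)) * 1) by (field; lra).
  apply Rmult_le_compat; [| lra | | lra].
  - apply Rmult_le_pos; [apply Rmult_le_pos |]; lra.
  - apply Rmult_le_compat; [apply Rmult_le_pos | | apply Rmult_le_compat_l |]; lra.
Qed.

Lemma exists_gamma rbar : 0 < rbar -> Omega W rbar = b ->
  exists gamma, 0 < gamma /\ forall r, rbar < r ->
    gamma <= 2 * k ^ 2 * r ^ 3 / (m ^ 2 + k ^ 2 * r ^ 2) ^ 2 \/
    gamma * psi r <= k ^ 2 * r ^ 2 / (m ^ 2 + k ^ 2 * r ^ 2).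
Proof.
  intros Hrbar Hb. set (c := rbar + 1).
  set (g_near := 2 * k ^ 2 * rbar ^ 3 / (m ^ 2 + k ^ 2 * c ^ 2) ^ 2).
  set (g_far := k ^ 2 * c ^ 3 * (b - Omega W c) / (2 * b * (m ^ 2 + k ^ 2 * c ^ 2))).
  assert (Hb0 : 0 < b).
  { rewrite <- Hb. pose proof (W_pos rbar Hrbar). pose proof (W_lt_2Omega rbar Hrbar). lra. }
  assert (Hphi : 0 < b - Omega W c).
  { rewrite <- Hb. pose proof (Omega_decreasing rbar c Hrbar ltac:(unfold c; lra)). lra. }
  assert (Hk2 : 0 < k ^ 2) by (apply pow_lt; lra).
  assert (Hc3 : 0 < c ^ 3) by (apply pow_lt; unfold c; lra).
  assert (Hrbar3 : 0 < rbar ^ 3) by (apply pow_lt; lra).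
  assert (HD : 0 < m ^ 2 + k ^ 2 * c ^ 2) by nra.
  exists (Rmin g_near g_far); split.
  { apply Rmin_pos; apply Rdiv_lt_0_compat; try apply pow_lt; try nra.
    apply Rmult_lt_0_compat; [apply Rmult_lt_0_compat |]; lra. }
  intros r Hr. destruct (Rle_or_lt r c) as [Hrc | Hcr]; [left | right].
  - eapply Rle_trans; [apply Rmin_l |].
    apply near_coefficient_le; lra.
  - assert (Hbr : Omega W r < b) by (rewrite <- Hb; apply Omega_decreasing; lra).
    eapply Rle_trans; [apply Rmult_le_compat_r; [| apply Rmin_r] |].
    + apply Rlt_le, psi_pos; lra.
    + apply (far_coefficient_le rbar); unfold c in *; lra.
Qed.

Lemma Lop_Ufun_ge gamma r : 0 <= gamma -> 0 < r -> Omega W r < b -> 0 < d < 1 ->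
  k ^ 2 / m ^ 2 * J W r <= d * (1 - d) ->
  gamma <= 2 * k ^ 2 * r ^ 3 / (m ^ 2 + k ^ 2 * r ^ 2) ^ 2 \/
  gamma * psi r <= k ^ 2 * r ^ 2 / (m ^ 2 + k ^ 2 * r ^ 2) ->
  gamma * Deriv (Ufun W b d) r <= Lop W m k b (Ufun W b d) r.
Proof.
  intros Hg Hr Hb Hd HJ Hgamma.
  rewrite (Deriv_is_derive _ _ _ (is_derive_Ufun r Hr Hb)), Lop_Ufun by assumption.
  assert (HU : 0 < Ufun W b d r) by apply exp_pos.
  assert (HD : 0 < m ^ 2 + k ^ 2 * r ^ 2) by nra.
  assert (Hk2r : 0 < k ^ 2 * r ^ 2) by (apply Rmult_lt_0_compat; apply pow_lt; lra).
  replace (gamma * (d * psi r * Ufun W b d r)) with (Ufun W b d r * (gamma * (d * psi r)))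
    by ring.
  apply Rmult_le_compat_l; [lra |].
  eapply Rle_trans; [| now apply Lop_Ufun_ratio_lower].
  replace (2 * d * k ^ 2 * r ^ 3 / (m ^ 2 + k ^ 2 * r ^ 2) ^ 2 * psi r)
    with (2 * k ^ 2 * r ^ 3 / (m ^ 2 + k ^ 2 * r ^ 2) ^ 2 * (d * psi r)) by (field; lra).
  apply mul_le_either; try lra.
  - apply Rlt_le, psi_pos; assumption.
  - apply Rlt_le, Rdiv_lt_0_compat; [| apply pow_lt; lra].
    replace (2 * k ^ 2 * r ^ 3) with (2 * r * (k ^ 2 * r ^ 2)) by ring. nra.
  - apply Rlt_le, Rdiv_lt_0_compat; lra.
Qed.

End Vorticity_profile.

Lemma classW_spec W : classW W -> exists Wd,
  (forall r, 0 < r -> is_derive W r (Wd r)) /\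
  (forall eps, 0 < eps ->
     exists delta, 0 < delta /\ forall h, 0 < h < delta -> Rabs (W h - W 0) < eps) /\
  (forall r, 0 < r -> Wd r < 0) /\
  (forall r, 0 < r -> 0 < W r) /\
  (forall r, 0 < r -> Deriv (J W) r < 0).
Proof.
  intros [[Wd [HWd [HWd0 [_ [_ Wd_neg]]]]] [HWpos [_ [HJd _]]]].
  exists Wd; split; [| split; [| split; [| split]]]; auto.
  - intros r Hr; now apply is_derive_Reals, HWd.
  - exact (right_continuous_of_right_derivative W (Wd 0) HWd0).
  - intros r Hr; apply HWpos; lra.
Qed.

Theorem lemma4p4 (W : R -> R) (m : nat) (k b rbar : R) :
  classW W -> (1 <= m)%nat -> 0 < k -> 0 < b < 1 -> 0 < rbar ->
  Omega W rbar = b ->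
  J W rbar < (INR m) ^ 2 / (4 * k ^ 2) ->
  exists gamma, 0 < gamma /\
    forall sgn, (sgn = 1 \/ sgn = -1) ->
      let U := Ufun W b (dpm W (INR m) k rbar sgn) in
      forall r, rbar < r ->
        (exists l, derivable_pt_lim U r l) /\
        (exists l, derivable_pt_lim (flux (INR m) k U) r l) /\
        gamma * Deriv U r <= Lop W (INR m) k b U r /\
        0 < gamma * Deriv U r.
Proof.
  intros HW Hm Hk Hb Hrbar HOrbar HJ.
  destruct (classW_spec W HW) as [Wd [W_deriv [W_cont [Wd_neg [W_pos HJd]]]]].
  set (M := INR m) in *. assert (HM : 1 <= M) by exact (le_INR 1 m Hm).
  assert (HOmega : forall r, rbar < r -> Omega W r < b).
  { intros r Hr; rewrite <- HOrbar. apply (Omega_decreasing W Wd); auto; lra. }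
  assert (HJr : forall r, rbar < r -> J W r <= J W rbar).
  { intros r Hr. apply Rlt_le, (Deriv_neg_decreasing (J W) 0); auto. }
  assert (Hc := scaled_lt_quarter k M (J W rbar) Hk ltac:(lra)
                  (J_pos W Wd W_deriv W_cont Wd_neg W_pos rbar Hrbar) HJ).
  destruct (exists_gamma W Wd W_deriv W_cont Wd_neg W_pos M k b HM Hk rbar Hrbar HOrbar)
    as [gamma [Hgamma Hgamma_r]].
  exists gamma; split; [exact Hgamma |]. intros sgn Hsgn U r Hr.
  destruct (half_pm_sqrt_spec _ sgn Hc Hsgn) as [Hd Hdd]. fold (dpm W M k rbar sgn) in Hd, Hdd.
  assert (Hr0 : 0 < r) by lra.
  repeat split.
  - eexists; apply is_derive_Reals, (is_derive_Ufun W Wd W_deriv W_cont); auto.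
  - eexists; apply is_derive_Reals, (is_derive_flux_Ufun W Wd W_deriv W_cont Wd_neg); auto.
  - apply (Lop_Ufun_ge W Wd); auto; [lra |].
    rewrite Hdd. apply Rmult_le_compat_l; [| auto].
    apply Rlt_le, Rdiv_lt_0_compat; apply pow_lt; lra.
  - apply Rmult_lt_0_compat; [exact Hgamma |].
    apply (Deriv_Ufun_pos W Wd W_deriv W_cont Wd_neg); auto; lra.
Qed.
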